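(* Let $\mathcal{E}:\mathcal{S}(\mathcal{H}_1)\otimes\mathcal{S}(\mathcal{H}_2)\to\mathcal{S}(\mathcal{H}_1)$ be any channel such that $\Delta\circ\mathcal{E}\circ\Delta=\Delta\circ\mathcal{E}$, where $\Delta(\rho)=\sum_x|x\rangle\langle x|\rho|x\rangle\langle x|$ is the dephasing map in the computational basis. Then for any state $\tau\in\mathcal{S}(\mathcal{H}_2)$, the channel $\mathcal{E}_\tau(\rho):=\mathcal{E}(\rho\otimes\tau)$ cannot implement any coherent unitary exactly.
   Context: A unitary is incoherent if it has the form $\sum_x e^{i\theta_x}|\pi(x)\rangle\langle x|$ for real $\theta_x$ and a permutation $\pi$; otherwise it is coherent. $\mathcal{S}(\mathcal{H})$ denotes the set of density operators on $\mathcal{H}$. *)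

(* Scalars: an arbitrary numClosedFieldType C (e.g. the
   complex numbers), whose partial order gives 0 <= z iff z is real and >= 0. *)
From HB Require Import structures.
From mathcomp Require Import all_boot all_order all_algebra all_fingroup.
From mathcomp Require Export mxtens.
Set Implicit Arguments. Unset Strict Implicit. Unset Printing Implicit Defensive.
Import Order.TTheory GRing.Theory Num.Theory.
Local Open Scope ring_scope.

Section QDefs.
Variable C : numClosedFieldType.

Definition adjmx {p q : nat} (A : 'M[C]_(p, q)) : 'M[C]_(q, p) :=
  (map_mx (fun z => z^*) A)^T.

Definition psd {N : nat} (A : 'M[C]_N) : Prop :=
  adjmx A = A /\ forall v : 'cV[C]_N, 0 <= (adjmx v *m A *m v) 0 0.

Definition density {N : nat} (rho : 'M[C]_N) : Prop :=
  psd rho /\ \tr rho = 1.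

(* the (a,c) block of X : 'M_(k * N) w.r.t. the factorisation C^k (x) C^N *)
Definition blockmx {k N : nat} (X : 'M[C]_(k * N)) (a c : 'I_k) : 'M[C]_N :=
  \matrix_(p, q) X (mxtens_index (a, p)) (mxtens_index (c, q)).

(* (id_k (x) E) applied to X *)
Definition ampl {N M : nat} (k : nat) (E : 'M[C]_N -> 'M[C]_M)
  (X : 'M[C]_(k * N)) : 'M[C]_(k * M) :=
  \matrix_(i, j) E (blockmx X (mxtens_unindex i).1 (mxtens_unindex j).1)
                   (mxtens_unindex i).2 (mxtens_unindex j).2.

Definition channel {N M : nat} (E : 'M[C]_N -> 'M[C]_M) : Prop :=
  [/\ (forall (a : C) (A B : 'M[C]_N), E (a *: A + B) = a *: E A + E B),
      (forall (k : nat) (X : 'M[C]_(k * N)), psd X -> psd (ampl E X)) &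
      (forall A : 'M[C]_N, \tr (E A) = \tr A)].

Definition dephase {N : nat} (A : 'M[C]_N) : 'M[C]_N :=
  \matrix_(i, j) (if i == j then A i j else 0).

Definition unitary {N : nat} (U : 'M[C]_N) : Prop :=
  U *m adjmx U = 1%:M /\ adjmx U *m U = 1%:M.

(* incoherent unitary: U = sum_x e^{i theta_x} |pi(x)><x|; the phases
   e^{i theta_x} are exactly the scalars of modulus one. *)
Definition incoherent {N : nat} (U : 'M[C]_N) : Prop :=
  exists (pi : 'S_N) (ph : 'I_N -> C),
    (forall x, `|ph x| = 1) /\
    U = \matrix_(i, j) (if i == pi j then ph j else 0).

Definition coherent {N : nat} (U : 'M[C]_N) : Prop :=
  unitary U /\ ~ incoherent U.

Definition implements {N : nat} (F : 'M[C]_N -> 'M[C]_N) (U : 'M[C]_N) : Prop :=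
  forall rho : 'M[C]_N, density rho -> F rho = U *m rho *m adjmx U.

End QDefs.

From mathcomp Require Import all_boot all_order all_algebra all_fingroup.
From mathcomp Require Import mxtens.
From mathcomp Require Import ring.
Import Order.TTheory GRing.Theory Num.Theory.
Set Implicit Arguments. Unset Strict Implicit. Unset Printing Implicit Defensive.
Local Open Scope ring_scope.

(* Since Delta o E o Delta = Delta o E, the populations (diagonal entries) of
   E(rho (x) tau) depend only on the populations of rho, and linearly so.  If
   E_tau implements U, then for every pure state v the populations of U v are
   the mixture sum_p |v_p|^2 |U_ip|^2 of those of v, as if U acted classically.
   Testing v = e_x + e_y and v = e_x + i e_y kills the interference term
   conj(U_ix) U_iy, so every row of U has at most one nonzero entry, and a
   unitary with this property is a permutation matrix with phases. *)

Section ConjugateTranspose.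
Variable C : numClosedFieldType.

Lemma adjmxE p q (A : 'M[C]_(p, q)) i j : adjmx A i j = (A j i)^*.
Proof. by rewrite !mxE. Qed.

Lemma adjmx_mul p q r (A : 'M[C]_(p, q)) (B : 'M[C]_(q, r)) :
  adjmx (A *m B) = adjmx B *m adjmx A.
Proof.
apply/matrixP=> i j; rewrite adjmxE !mxE rmorph_sum; apply: eq_bigr => k _.
by rewrite !adjmxE rmorphM mulrC.
Qed.

Lemma adjmxK p q (A : 'M[C]_(p, q)) : adjmx (adjmx A) = A.
Proof. by apply/matrixP=> i j; rewrite !adjmxE conjCK. Qed.

Lemma adjmx_delta p q (i : 'I_p) (j : 'I_q) :
  adjmx (delta_mx i j : 'M[C]_(p, q)) = delta_mx j i.
Proof. by apply/matrixP=> k l; rewrite adjmxE !mxE rmorph_nat andbC. Qed.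

Lemma adjmx1 p : adjmx (1%:M : 'M[C]_p) = 1%:M.
Proof. by apply/matrixP=> i j; rewrite adjmxE !mxE rmorph_nat eq_sym. Qed.

Lemma adjmx_tens p q r s (A : 'M[C]_(p, q)) (B : 'M[C]_(r, s)) :
  adjmx (A *t B) = adjmx A *t adjmx B.
Proof. by rewrite /adjmx (map_mxT _) trmx_tens. Qed.

Lemma rank1E p (u : 'cV[C]_p) i j : (u *m adjmx u) i j = u i 0 * (u j 0)^*.
Proof. by rewrite !mxE big_ord1 adjmxE. Qed.

Lemma mxtrace_rank1 p (u : 'cV[C]_p) :
  \tr (u *m adjmx u) = \sum_i `|u i 0| ^+ 2.
Proof. by apply: eq_bigr => i _; rewrite rank1E normCK. Qed.

Lemma mxtrace_tens p q (A : 'M[C]_p) (B : 'M[C]_q) :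
  \tr (A *t B) = \tr A * \tr B.
Proof. by rewrite /mxtrace mulr_sum; apply: eq_bigr => k _; rewrite mxE. Qed.


Lemma conj_rank1_diag p q (A : 'M[C]_(p, q)) (v : 'cV[C]_q) i :
  (A *m (v *m adjmx v) *m adjmx A) i i = `|(A *m v) i 0| ^+ 2.
Proof. by rewrite mulmxA -mulmxA -adjmx_mul rank1E normCK. Qed.

Lemma mxtrace_delta p (i : 'I_p) : \tr (delta_mx i i : 'M[C]_p) = 1.
Proof.
rewrite /mxtrace (bigD1 i) //= big1 ?addr0 => [|j ji]; rewrite mxE ?eqxx //.
by rewrite (negbTE ji).
Qed.

End ConjugateTranspose.

Section States.
Variable C : numClosedFieldType.

Lemma psd_conj p q (B : 'M[C]_(p, q)) (Y : 'M[C]_q) :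
  psd Y -> psd (B *m Y *m adjmx B).
Proof.
case=> hY hp; split; first by rewrite !adjmx_mul adjmxK hY mulmxA.
by move=> v; have := hp (adjmx B *m v); rewrite adjmx_mul adjmxK !mulmxA.
Qed.

Lemma psd1 : psd (1%:M : 'M[C]_1).
Proof.
split=> [|v]; first exact: adjmx1.
rewrite mulmx1 !mxE; apply: sumr_ge0 => i _.
by rewrite adjmxE mulrC -normCK exprn_ge0.
Qed.

Lemma psd_castmx p q (e : p = q) (A : 'M[C]_p) : psd A -> psd (castmx (e, e) A).
Proof. by case: q / e; rewrite castmx_id. Qed.

Lemma psd_rank1_tens p q (u : 'cV[C]_p) (tau : 'M[C]_q) :
  psd tau -> psd ((u *m adjmx u) *t tau).
Proof.
move=> htau; have h1tau : psd ((1%:M : 'M[C]_1) *t tau).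
  by rewrite tens_scalar1mx; apply: psd_castmx.
have := psd_conj (u *t (1%:M : 'M[C]_q)) h1tau.
by rewrite adjmx_tens adjmx1 !tensmx_mul mulmx1 mul1mx mulmx1.
Qed.

Lemma density_rank1 p (u : 'cV[C]_p) :
  \tr (u *m adjmx u) = 1 -> density (u *m adjmx u).
Proof. by split=> //; have := psd_conj u psd1; rewrite mulmx1. Qed.

Lemma density_rank1_tens p q (u : 'cV[C]_p) (tau : 'M[C]_q) :
  \tr (u *m adjmx u) = 1 -> density tau -> density ((u *m adjmx u) *t tau).
Proof.
move=> hu [htau tr_tau]; split; first exact: psd_rank1_tens.
by rewrite mxtrace_tens hu tr_tau mulr1.
Qed.

End States.

Section Channel.
Variables (C : numClosedFieldType) (N M : nat) (E : 'M[C]_N -> 'M[C]_M).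
Hypothesis hE : channel E.

Lemma channel_linear a A B : E (a *: A + B) = a *: E A + E B.
Proof. by case: hE. Qed.

Lemma channel0 : E 0 = 0.
Proof.
by have := channel_linear (-1) 0 0; rewrite !scaleN1r oppr0 addr0 addNr.
Qed.

Lemma channel_sum (I : finType) (c : I -> C) (A : I -> 'M[C]_N) :
  E (\sum_i c i *: A i) = \sum_i c i *: E (A i).
Proof.
apply: (big_ind2 (fun X Y => E X = Y)) => [|X1 Y1 X2 Y2 <- <-|i _].
- exact: channel0.
- by rewrite -[X1]scale1r channel_linear !scale1r.
- by have := channel_linear (c i) (A i) 0; rewrite !addr0 channel0 addr0.
Qed.

End Channel.

Section Dephasing.
Variable C : numClosedFieldType.

Lemma dephase_tens p q (A : 'M[C]_p) (B : 'M[C]_q) :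
  dephase (A *t B) = \sum_i A i i *: dephase (delta_mx i i *t B).
Proof.
apply/matrixP=> I J; rewrite summxE.
case: (mxtens_indexP I) => a b; case: (mxtens_indexP J) => c d.
have tens_eq i j k l : (mxtens_index (i, j) == mxtens_index (k, l) :> 'I_(p * q))
    = (i == k) && (j == l) by apply: (can_eq (@mxtens_indexK _ _)).
rewrite !mxE tens_eq !mxtens_indexK /=.
have [<-|ac] := eqVneq a c; last first.
  by rewrite big1 // => i _; rewrite !mxE tens_eq (negbTE ac) mulr0.
rewrite (bigD1 a) //= big1 ?addr0 => [|i ia];
  rewrite !mxE tens_eq !mxtens_indexK !eqxx /=.
  by case: (b == d); rewrite ?mul1r ?mulr0.
by rewrite [a == i]eq_sym (negbTE ia) mul0r if_same mulr0.
Qed.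

End Dephasing.

Section RowSupport.
Variable C : numClosedFieldType.

Lemma norm_polarization_eq0 (a b : C) :
  `|a + b| ^+ 2 = `|a| ^+ 2 + `|b| ^+ 2 ->
  `|a + 'i * b| ^+ 2 = `|a| ^+ 2 + `|b| ^+ 2 -> a = 0 \/ b = 0.
Proof.
rewrite !normCK !(rmorphD, rmorphM) /= conjCi.
have ii : 'i * - 'i = 1 :> C by rewrite mulrN -expr2 sqrCi opprK.
have -> : (a + b) * (a^* + b^*) = a * a^* + b * b^* + (a * b^* + b * a^*) by ring.
have -> : (a + 'i * b) * (a^* + - 'i * b^*) =
  a * a^* + ('i * - 'i) * (b * b^*) + 'i * (b * a^* - a * b^*) by ring.
rewrite ii mul1r => h1 h2.
have /eqP : 'i * (b * a^* - a * b^*) = 0.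
  by apply: (addrI (a * a^* + b * b^*)); rewrite addr0.
rewrite mulf_eq0 (negbTE (neq0Ci C)) subr_eq0 /= => /eqP ba_ab.
have : a * b^* *+ 2 = 0.
  by rewrite mulr2n -{2}ba_ab; apply: (addrI (a * a^* + b * b^*)); rewrite addr0.
move/eqP; rewrite mulrn_eq0 /= mulf_eq0 conjC_eq0.
by case/orP=> /eqP; [left | right].
Qed.

Variables (n : nat) (U : 'M[C]_n).

Definition mixes_populations (v : 'cV[C]_n) :=
  forall i, `|(U *m v) i 0| ^+ 2 = \sum_p `|v p 0| ^+ 2 * `|U i p| ^+ 2.

Lemma mixes_populationsZ a (v : 'cV[C]_n) :
  a != 0 -> mixes_populations (a *: v) -> mixes_populations v.
Proof.
move=> a0 h i; have := h i; rewrite -scalemxAr mxE normrM exprMn.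
under eq_bigr do rewrite mxE normrM exprMn -mulrA.
by rewrite -mulr_sumr => /mulfI; apply; rewrite expf_neq0 // normr_eq0.
Qed.

Lemma mixes_populations_unit :
  (forall v : 'cV[C]_n, \sum_p `|v p 0| ^+ 2 = 1 -> mixes_populations v) ->
  forall v : 'cV[C]_n, mixes_populations v.
Proof.
move=> h v; set t := \sum_p `|v p 0| ^+ 2.
have t_ge0 : 0 <= t by apply: sumr_ge0 => p _; apply: exprn_ge0.
have [t0|tn0] := eqVneq t 0.
  have v0 : v = 0.
    apply/matrixP=> p j; rewrite (ord1 j) mxE; apply/eqP.
    by rewrite -normr_eq0 -sqrf_eq0 (psumr_eq0P _ t0) // => k _; apply: exprn_ge0.
  move=> i; rewrite v0 mulmx0 !mxE normr0 expr0n big1 // => p _.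
  by rewrite mxE normr0 expr0n mul0r.
have s_gt0 : 0 < sqrtC t by rewrite sqrtC_gt0 lt_def tn0.
apply: (@mixes_populationsZ (sqrtC t)^-1); first by rewrite invr_eq0 gt_eqF.
apply: h; under eq_bigr do rewrite mxE normrM exprMn.
by rewrite -mulr_sumr ger0_norm ?invr_ge0 ?ltW // exprVn sqrtCK mulVf.
Qed.

Lemma mixes_populations_row_support :
  (forall v, mixes_populations v) ->
  forall i x y, x != y -> U i x = 0 \/ U i y = 0.
Proof.
move=> h i x y xy.
have law c :
    `|U i x + c * U i y| ^+ 2 = `|U i x| ^+ 2 + `|c| ^+ 2 * `|U i y| ^+ 2.
  have := h (delta_mx x 0 + c *: delta_mx y 0) i.
  rewrite mulmxDr -scalemxAr -!colE !mxE => ->.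
  rewrite (bigD1 x) // (bigD1 y) 1?eq_sym //= big1 ?addr0 => [|p /andP [px py]].
    rewrite !mxE !eqxx (negbTE xy) eq_sym (negbTE xy) /=.
    by rewrite mulr0 addr0 mulr1 add0r normr1 expr1n mul1r.
  by rewrite !mxE (negbTE px) (negbTE py) mulr0 addr0 normr0 expr0n mul0r.
apply: norm_polarization_eq0.
  by have := law 1; rewrite mul1r normr1 expr1n mul1r.
by rewrite law normCi expr1n mul1r.
Qed.

End RowSupport.

Section Incoherent.
Variables (C : numClosedFieldType) (n : nat) (U : 'M[C]_n).
Hypothesis isoU : adjmx U *m U = 1%:M.
Hypothesis row_support : forall i x y, x != y -> U i x = 0 \/ U i y = 0.

Lemma isometry_col_norm j : \sum_i `|U i j| ^+ 2 = 1.
Proof.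
transitivity ((adjmx U *m U) j j); last by rewrite isoU mxE eqxx.
by rewrite mxE; apply: eq_bigr => i _; rewrite adjmxE normCK mulrC.
Qed.

Lemma isometry_col_neq0 j : exists i, U i j != 0.
Proof.
have [i Uij|U_j0] := pickP (fun i => U i j != 0); first by exists i.
have := isometry_col_norm j; rewrite big1 => [/esym/eqP|i _].
  by rewrite oner_eq0.
by move/negbFE/eqP: (U_j0 i) ->; rewrite normr0 expr0n.
Qed.

Lemma row_support_incoherent : incoherent U.
Proof.
pose g j := xchoose (isometry_col_neq0 j).
have gP j : U (g j) j != 0 := xchooseP (isometry_col_neq0 j).
have U_eq0 i j k : j != k -> U i j != 0 -> U i k = 0.
  by move=> jk /negbTE Uij; case: (row_support i jk) => // /eqP; rewrite Uij.
have g_inj : injective g.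
  move=> j k gjk; apply/eqP; apply: contraNT (gP k) => jk.
  by rewrite -gjk (U_eq0 _ j) ?gP.
pose pi : 'S_n := perm g_inj.
have off i j : i != pi j -> U i j = 0.
  move=> i_pij; apply: (U_eq0 i ((pi^-1)%g i)).
    by apply: contraNneq i_pij => <-; rewrite permKV.
  by have := gP ((pi^-1)%g i); rewrite -(permE g_inj) permKV.
exists pi, (fun j => U (pi j) j); split; last first.
  by apply/matrixP=> i j; rewrite mxE; case: eqP => [->|/eqP /off].
move=> j; have := isometry_col_norm j; rewrite (bigD1 (pi j)) //= big1 ?addr0.
  move/eqP; rewrite sqrf_eq1 => /orP[/eqP //|/eqP h].
  by have := normr_ge0 (U (pi j) j); rewrite h ler0N1.
by move=> i /off ->; rewrite normr0 expr0n.
Qed.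

End Incoherent.

Section Populations.
Variables (C : numClosedFieldType) (n m : nat) (E : 'M[C]_(n * m) -> 'M[C]_n).
Hypothesis hE : channel E.
Hypothesis hD : forall rho : 'M[C]_(n * m), density rho ->
  dephase (E (dephase rho)) = dephase (E rho).
Variables (tau : 'M[C]_m) (U : 'M[C]_n).
Hypothesis htau : density tau.
Hypothesis himp : implements (fun rho : 'M[C]_n => E (rho *t tau)) U.

Lemma channel_diag_dephase X i : density X -> E (dephase X) i i = E X i i.
Proof. by move=> /hD/(congr1 (fun Y : 'M_n => Y i i)); rewrite !mxE eqxx. Qed.

Lemma implements_populations (v : 'cV[C]_n) i : \tr (v *m adjmx v) = 1 ->
  `|(U *m v) i 0| ^+ 2 = \sum_p `|v p 0| ^+ 2 * `|U i p| ^+ 2.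
Proof.
have implE (w : 'cV[C]_n) : \tr (w *m adjmx w) = 1 ->
    E ((w *m adjmx w) *t tau) i i = `|(U *m w) i 0| ^+ 2.
  by move=> hw; rewrite himp ?conj_rank1_diag //; apply: density_rank1.
move=> hv; rewrite -implE // -channel_diag_dephase; last exact: density_rank1_tens.
rewrite dephase_tens channel_sum // summxE; apply: eq_bigr => p _.
pose ket : 'cV[C]_n := delta_mx p 0.
have ket_p : delta_mx p p = ket *m adjmx ket by rewrite adjmx_delta mul_delta_mx.
have tr_ket : \tr (ket *m adjmx ket) = 1 by rewrite -ket_p mxtrace_delta.
rewrite mxE ket_p channel_diag_dephase; last exact: density_rank1_tens.
by rewrite implE // rank1E normCK /ket -colE mxE.
Qed.

End Populations.

Theorem lemma5 (C : numClosedFieldType) (n m : nat)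
  (E : 'M[C]_(n * m) -> 'M[C]_n)
  (hE : channel E)
  (hD : forall rho : 'M[C]_(n * m), density rho ->
          dephase (E (dephase rho)) = dephase (E rho))
  (tau : 'M[C]_m) (htau : density tau) :
  forall U : 'M[C]_n, coherent U ->
    ~ implements (fun rho : 'M[C]_n => E (rho *t tau)) U.
Proof.
move=> U [[_ isoU] not_incoherent] himp; apply: not_incoherent.
apply: (row_support_incoherent isoU); apply: mixes_populations_row_support.
apply: mixes_populations_unit => v v_unit i.
by apply: (implements_populations hE hD htau himp); rewrite mxtrace_rank1.
Qed.
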